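(* Let $(A,\succ,\prec)$ be a Leibniz-dendriform algebra and $r\in A\otimes A$ with $S(r)=0$, $r+\tau(r)$ invariant and $T_{r+\tau(r)}:A^*\to A$ a linear isomorphism (i.e. $(A,\succ,\prec,\Delta_{\succ,r},\Delta_{\prec,r})$ is factorizable). Define $\Phi:A^*\to A\oplus A$ by $\Phi(\zeta)=(T_r(\zeta),-T_{\tau(r)}(\zeta))$. Then $\mathrm{Im}(\Phi)$ is a Leibniz-dendriform subalgebra of the direct product Leibniz-dendriform algebra $A\oplus A$ (componentwise operations), and $\Phi$ is an isomorphism of Leibniz-dendriform algebras from $(A^*,\succ_r,\prec_r)$ onto $\mathrm{Im}(\Phi)$. Moreover, every $x\in A$ has a unique decomposition $x=x_1-x_2$ with $(x_1,x_2)\in\mathrm{Im}(\Phi)$.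
   Context: $\langle\cdot,\cdot\rangle$ is the natural pairing, $I$ the identity, $\tau(a\otimes b)=b\otimes a$. A Leibniz-dendriform algebra is a vector space $A$ with bilinear operations $\succ,\prec$ such that, with $x\circ y:=x\succ y+x\prec y$, for all $x,y,z$: $(x\circ y)\succ z=x\succ(y\succ z)-y\succ(x\succ z)$, $y\prec(x\circ z)+(x\succ y)\prec z=x\succ(y\prec z)$, $x\prec(y\circ z)=(x\prec y)\prec z+y\succ(x\prec z)$. Write $x\odot y:=x\succ y+y\prec x$, $x\star y:=x\circ y+y\circ x$; $L_*(x)y=x*y$, $R_*(x)y=y*x$; $L_\odot:=L_\succ+R_\prec$, $R_\odot:=R_\succ+L_\prec$, $L_\star:=L_\circ+R_\circ$; for $f:A\to\mathrm{End}(A)$, $f^*:A\to\mathrm{End}(A^* )$ is $\langle f^*(x)\xi,v\rangle=-\langle\xi,f(x)v\rangle$. For $r=\sum_ia_i\otimes b_i$: $T_r:A^*\to A$, $\langle T_r(\zeta),\eta\rangle=\langle r,\zeta\otimes\eta\rangle$; $S(r):=\sum_{i,j}\big(a_i\otimes a_j\otimes (b_j\circ b_i)-a_i\otimes (b_i\odot a_j)\otimes b_j-(a_i\succ a_j)\otimes b_i\otimes b_j\big)$. $s\in A\otimes A$ is invariant if for all $x$: $(L_\odot(x)\otimes I-I\otimes R_\circ(x))s=0$ and $(L_\star(x)\otimes I-I\otimes R_\prec(x))\tau(s)=0$. Operations on $A^*$: $\zeta\succ_r\eta=L_\circ^*(T_r(\zeta))\eta-R_\odot^*(T_{\tau(r)}(\eta))\zeta$,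 $\zeta\prec_r\eta=L_\prec^*(T_{\tau(r)}(\zeta))\eta-L_\star^*(T_r(\eta))\zeta$ (the duals of $\Delta_{\succ,r}(x)=(L_\odot(x)\otimes I-I\otimes R_\circ(x))r$, $\Delta_{\prec,r}(x)=(L_\star(x)\otimes I-I\otimes R_\prec(x))\tau(r)$). *)

(* A Leibniz-dendriform algebra of finite dimension n over a
   field K is modelled on A := 'rV[K]_n (standard basis ev p); the dual A^* is
   also modelled on 'rV[K]_n with the dual basis, pairing <xi, v> = sum_j xi_j v_j.
   Tensors in A (x) A are n x n matrices: s = sum_{p,q} s p q  e_p (x) e_q.
   Tensors in A (x) A (x) A are functions 'I_n -> 'I_n -> 'I_n -> K. *)
From HB Require Import structures.
From mathcomp Require Import all_boot all_order all_algebra.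
Set Implicit Arguments. Unset Strict Implicit. Unset Printing Implicit Defensive.
Import Order.TTheory GRing.Theory Num.Theory.
Local Open Scope ring_scope.

Section LeibnizDendriform.
Variables (K : fieldType) (n : nat).
Local Notation V := 'rV[K]_n.

Definition ev (p : 'I_n) : V := delta_mx 0 p.

Definition bilinear_op (op : V -> V -> V) : Prop :=
  (forall x, linear (op x)) /\ (forall y, linear (fun x => op x y)).

Variables (succ prec : V -> V -> V).

Definition ld_circ (x y : V) : V := succ x y + prec x y.
Definition ld_odot (x y : V) : V := succ x y + prec y x.
Definition ld_star (x y : V) : V := ld_circ x y + ld_circ y x.

Definition is_LD : Prop :=
  bilinear_op succ /\ bilinear_op prec /\
  (forall x y z, succ (ld_circ x y) z = succ x (succ y z) - succ y (succ x z)) /\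
  (forall x y z, prec y (ld_circ x z) + prec (succ x y) z = succ x (prec y z)) /\
  (forall x y z, prec x (ld_circ y z) = prec (prec x y) z + succ y (prec x z)).

Definition tens2 (u v : V) : 'M[K]_n := u^T *m v.
Definition tens3 (u v w : V) : 'I_n -> 'I_n -> 'I_n -> K :=
  fun i j k => u 0 i * v 0 j * w 0 k.

(* S(r), using the decomposition r = sum_{(p,q)} (r p q *: e_p) (x) e_q *)
Definition S_tensor (r : 'M[K]_n) : 'I_n -> 'I_n -> 'I_n -> K :=
  fun i j k =>
  \sum_p \sum_q \sum_s \sum_t
    ( tens3 (r p q *: ev p) (r s t *: ev s) (ld_circ (ev t) (ev q)) i j k
    - tens3 (r p q *: ev p) (ld_odot (ev q) (r s t *: ev s)) (ev t) i j k
    - tens3 (succ (r p q *: ev p) (r s t *: ev s)) (ev q) (ev t) i j k ).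

Definition tapp (f g : V -> V) (s : 'M[K]_n) : 'M[K]_n :=
  \sum_p \sum_q s p q *: tens2 (f (ev p)) (g (ev q)).

Definition is_invariant (s : 'M[K]_n) : Prop :=
  forall x : V,
    tapp (ld_odot x) id s - tapp id (fun y => ld_circ y x) s = 0 /\
    tapp (ld_star x) id s^T - tapp id (fun y => prec y x) s^T = 0.

Definition dpair (xi v : V) : K := \sum_j xi 0 j * v 0 j.

(* T_r : A^* -> A, <T_r zeta, eta> = <r, zeta (x) eta> *)
Definition Tmap (r : 'M[K]_n) (zeta : V) : V := zeta *m r.

(* dual of an endomorphism g of A : <g^* xi, v> = - <xi, g v> *)
Definition dualop (g : V -> V) (xi : V) : V := \row_i (- dpair xi (g (ev i))).

Definition dsucc (r : 'M[K]_n) (zeta eta : V) : V :=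
  dualop (ld_circ (Tmap r zeta)) eta
  - dualop (fun y => ld_odot y (Tmap r^T eta)) zeta.

Definition dprec (r : 'M[K]_n) (zeta eta : V) : V :=
  dualop (prec (Tmap r^T zeta)) eta - dualop (ld_star (Tmap r eta)) zeta.

End LeibnizDendriform.

Definition prodop (T : Type) (op : T -> T -> T) (a b : T * T) : T * T :=
  (op a.1 b.1, op a.2 b.2).

Definition Phi (K : fieldType) (n : nat) (r : 'M[K]_n) (zeta : 'rV[K]_n)
  : 'rV[K]_n * 'rV[K]_n := (Tmap r zeta, - Tmap r^T zeta).

From HB Require Import structures.
From mathcomp Require Import all_boot all_order all_algebra.
From mathcomp Require Import ring.
Import GRing.Theory.
Local Open Scope ring_scope.

Set Implicit Arguments. Unset Strict Implicit.

(* Put s = r + tau(r) and g = T_s^-1.  The form B(a, b) = <g a, b> is nondegenerate,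
   and P = T_r g satisfies a - P a = T_{tau(r)} g a because T_r + T_{tau(r)} = T_s.
   Invariance of s says that B is invariant (odot against circ, star against prec),
   and S(r) = 0 is a single trilinear identity in B and P.  Paired through B, each of
   the four component identities "T_r and -T_{tau(r)} carry succ_r, prec_r to succ,
   prec" becomes a trilinear identity in B and P which is a linear combination of
   instances of those three.  Since T_r zeta - (-T_{tau(r)} zeta) = T_s zeta,
   bijectivity of T_s gives injectivity of Phi and the unique decomposition
   x = x1 - x2. *)

Lemma dpair_is_bilinear (K : fieldType) n : bilinear_for
  (GRing.Scale.Law.clone _ _ *%R _) (GRing.Scale.Law.clone _ _ *%R _) (@dpair K n).
Proof.
split=> [v|u] a x y /=; rewrite /dpair mulr_sumr -big_split; apply: eq_bigr => j _;
  rewrite !mxE.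
- by rewrite mulrDl mulrA.
- by rewrite mulrDr mulrCA.
Qed.

HB.instance Definition _ (K : fieldType) n := bilinear_isBilinear.Build K
  'rV[K]_n 'rV[K]_n K _ _ (@dpair K n) (dpair_is_bilinear K n).

Section Pairing.
Variables (K : fieldType) (n : nat).
Local Notation V := 'rV[K]_n.
Local Notation ev := (ev K).

Lemma ev_coord (p a : 'I_n) : ev p 0 a = (a == p)%:R.
Proof. by rewrite mxE eqxx. Qed.

Lemma dpair_ev i (v : V) : dpair (ev i) v = v 0 i.
Proof.
rewrite /dpair (bigD1 i) //= big1 ?addr0 => [|j ji]; rewrite mxE.
  by rewrite !eqxx mul1r.
by rewrite (negbTE ji) andbF mul0r.
Qed.

Lemma dpair_mulmx (xi v : V) (M : 'M[K]_n) : dpair xi (v *m M) = dpair (xi *m M^T) v.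
Proof.
have dpairE (a b : V) : dpair a b = (a *m b^T) 0 0.
  by rewrite mxE; apply: eq_bigr => j _; rewrite mxE.
by rewrite !dpairE trmx_mul mulmxA.
Qed.

Lemma dpair_ext (u v : V) : (forall xi, dpair xi u = dpair xi v) -> u = v.
Proof. by move=> eq_uv; apply/rowP => j; have := eq_uv (ev j); rewrite !dpair_ev. Qed.

Lemma ev_mulmx b (M : 'M[K]_n) : ev b *m M = \sum_p M b p *: ev p.
Proof. by rewrite {1}(row_sum_delta (ev b *m M)); apply: eq_bigr => p _; rewrite -rowE mxE. Qed.

Lemma add_trmx_sym (M : 'M[K]_n) : (M + M^T)^T = M + M^T.
Proof. by rewrite linearD /= trmxK addrC. Qed.

Lemma linear_ev_sum (f : V -> V) : linear f -> forall v, f v = \sum_i v 0 i *: f (ev i).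
Proof.
move=> lin_f v.
pose fL : {linear V -> V} := HB.pack f (GRing.isLinear.Build _ _ _ _ f lin_f).
rewrite -[f]/(fL : V -> V) {1}(row_sum_delta v) linear_sum.
by apply: eq_bigr => i _; rewrite linearZ.
Qed.

Lemma dpair_dualop (g : V -> V) : linear g ->
  forall xi v, dpair v (dualop g xi) = - dpair xi (g v).
Proof.
move=> lin_g xi v; rewrite (linear_ev_sum lin_g) linear_sumr -sumrN.
by apply: eq_bigr => i _; rewrite linearZr /= !mxE mulrN mulrC.
Qed.

Lemma scalar_eq0_ev (f : V -> K) : scalar f -> (forall i, f (ev i) = 0) -> forall u, f u = 0.
Proof.
move=> lin_f f_ev u.
pose fL : {linear V -> K^o} := HB.pack f (GRing.isLinear.Build _ _ _ _ f lin_f).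
rewrite -[f]/(fL : V -> K^o) in f_ev *; rewrite (row_sum_delta u) linear_sum big1 // => i _.
by rewrite linearZ [fL _]f_ev; apply: mulr0.
Qed.
End Pairing.

(* In the application, [B a b] is [<T_s^-1 a, b>] and [P] is [T_r T_s^-1]. *)
Section PairedIdentities.
Variables (K : fieldType) (n : nat).
Local Notation V := 'rV[K]_n.
Variables (succ prec : {bilinear V -> V -> V}) (B : V -> V -> K) (P : V -> V).
Hypothesis B_addr : forall a b c, B a (b + c) = B a b + B a c.
Hypothesis B_oppr : forall a b, B a (- b) = - B a b.

Local Notation circ := (ld_circ succ prec).
Local Notation odot := (ld_odot succ prec).
Local Notation star := (ld_star succ prec).

Definition B_odot_circ X Y Z := B Y (odot X Z) - B Z (circ Y X).
Definition B_star_prec X Y Z := B Y (star X Z) - B Z (prec Y X).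
Definition B_S x y z := B z (circ (P y) (P x)) - B y (odot (P x) (z - P z))
  - B x (succ (y - P y) (z - P z)).

Hypothesis B_odot_circ0 : forall X Y Z, B_odot_circ X Y Z = 0.
Hypothesis B_star_prec0 : forall X Y Z, B_star_prec X Y Z = 0.
Hypothesis B_S0 : forall x y z, B_S x y z = 0.

Ltac expand := rewrite /B_odot_circ /B_star_prec /B_S /ld_star /ld_circ /ld_odot;
  rewrite ?(linearBl, linearBr, B_addr, B_oppr).

Lemma B_succ_P x y z :
  - B y (circ (P x) (z - P z)) + B x (odot (z - P z) (y - P y))
  = B z (succ (P x) (P y)).
Proof.
apply: subr0_eq.
transitivity (- B_star_prec x (P y) z - B_odot_circ y x z - B_odot_circ z x (P y)
  + B_S z x y - B_star_prec y (P x) z + B_star_prec y x z - B_odot_circ x z (P y)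
  + B_odot_circ z (P x) y + B_odot_circ y (P x) z).
  by expand; ring.
by rewrite !B_odot_circ0 !B_star_prec0 !B_S0; ring.
Qed.

Lemma B_succ_Q x y z :
  B y (circ (P x) (P z)) - B x (odot (P z) (y - P y))
  = B z (succ (x - P x) (y - P y)).
Proof.
apply: subr0_eq.
by transitivity (B_S z x y); [expand; ring | exact: B_S0].
Qed.

Lemma B_prec_P x y z :
  - B y (prec (x - P x) (z - P z)) + B x (star (P y) (z - P z))
  = B z (prec (P x) (P y)).
Proof.
apply: subr0_eq.
transitivity (- B_odot_circ x (P y) z + B_odot_circ x y z + B_star_prec x (P y) z
  - B_S y z x - B_S z y x + B_star_prec (P x) y z - B_odot_circ z (P y) x
  - B_star_prec x y z - B_odot_circ (P y) z x - B_odot_circ (P x) y z).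
  by expand; ring.
by rewrite !B_odot_circ0 !B_star_prec0 !B_S0; ring.
Qed.

Lemma B_prec_Q x y z :
  B y (prec (x - P x) (P z)) - B x (star (P y) (P z))
  = B z (prec (x - P x) (y - P y)).
Proof.
apply: subr0_eq.
transitivity (- B_S y z x - B_star_prec x z y - B_S z y x - B_odot_circ (P x) z y
  + B_odot_circ x z y + B_star_prec (P x) z y).
  by expand; ring.
by rewrite !B_odot_circ0 !B_star_prec0 !B_S0; ring.
Qed.
End PairedIdentities.
Section Operations.
Variables (K : fieldType) (n : nat).
Local Notation V := 'rV[K]_n.
Local Notation ev := (ev K).
Variables succ prec : {bilinear V -> V -> V}.
Local Notation circ := (ld_circ succ prec).
Local Notation odot := (ld_odot succ prec).
Local Notation star := (ld_star succ prec).

Lemma ld_circ_is_bilinear : bilinear_for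
  (GRing.Scale.Law.clone _ _ *:%R _) (GRing.Scale.Law.clone _ _ *:%R _) circ.
Proof.
by split=> [v|u] a x y /=; rewrite /ld_circ ?linearPl ?linearPr scalerDr addrACA.
Qed.
HB.instance Definition _ := bilinear_isBilinear.Build K V V V _ _ circ ld_circ_is_bilinear.

Lemma ld_odot_is_bilinear : bilinear_for
  (GRing.Scale.Law.clone _ _ *:%R _) (GRing.Scale.Law.clone _ _ *:%R _) odot.
Proof.
by split=> [v|u] a x y /=; rewrite /ld_odot ?linearPl ?linearPr scalerDr addrACA.
Qed.
HB.instance Definition _ := bilinear_isBilinear.Build K V V V _ _ odot ld_odot_is_bilinear.

Lemma ld_star_is_bilinear : bilinear_for
  (GRing.Scale.Law.clone _ _ *:%R _) (GRing.Scale.Law.clone _ _ *:%R _) star.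
Proof.
by split=> [v|u] a x y /=; rewrite /ld_star ?linearPl ?linearPr scalerDr addrACA.
Qed.
HB.instance Definition _ := bilinear_isBilinear.Build K V V V _ _ star ld_star_is_bilinear.

Lemma scale_ev_coord c (p a : 'I_n) : (c *: ev p) 0 a = c * (a == p)%:R.
Proof. by rewrite mxE ev_coord. Qed.

Lemma sum_scale_coord (w : 'I_n -> V) (c : 'I_n -> K) a :
  (\sum_i c i *: w i) 0 a = \sum_i c i * w i 0 a.
Proof. by rewrite summxE; apply: eq_bigr => i _; rewrite mxE. Qed.

Section STensor.
Variable r : 'M[K]_n.

Lemma S_tensor_circ_term a b c :
  \sum_p \sum_q \sum_s \sum_t
    tens3 (r p q *: ev p) (r s t *: ev s) (circ (ev t) (ev q)) a b c
  = dpair (ev c) (circ (ev b *m r) (ev a *m r)).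
Proof.
transitivity (\sum_q \sum_t r a q * r b t * circ (ev t) (ev q) 0 c).
  rewrite (big_only1 a) // => [|p pa _]; last first.
    apply: big1 => q _; apply: big1 => s _; apply: big1 => t _.
    by rewrite /tens3 scale_ev_coord eq_sym (negbTE pa) !(mulr0, mul0r).
  apply: eq_bigr => q _; rewrite (big_only1 b) // => [|s sb _]; last first.
    by apply: big1 => t _; rewrite /tens3 !scale_ev_coord eq_sym (negbTE sb) !(mulr0, mul0r).
  by apply: eq_bigr => t _; rewrite /tens3 !scale_ev_coord !eqxx !mulr1.
rewrite dpair_ev !ev_mulmx linear_sumlz summxE exchange_big.
apply: eq_bigr => t _; rewrite linearZl linear_sumr /= mxE summxE mulr_sumr.
by apply: eq_bigr => q _; rewrite linearZr /= !mxE; ring.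
Qed.

Lemma S_tensor_odot_term a b c :
  \sum_p \sum_q \sum_s \sum_t
    tens3 (r p q *: ev p) (odot (ev q) (r s t *: ev s)) (ev t) a b c
  = dpair (ev b) (odot (ev a *m r) (ev c *m r^T)).
Proof.
transitivity (\sum_q \sum_s r a q * r s c * odot (ev q) (ev s) 0 b).
  rewrite (big_only1 a) // => [|p pa _]; last first.
    apply: big1 => q _; apply: big1 => s _; apply: big1 => t _.
    by rewrite /tens3 scale_ev_coord eq_sym (negbTE pa) !(mulr0, mul0r).
  apply: eq_bigr => q _; apply: eq_bigr => s _; rewrite (big_only1 c) // => [|t tc _].
    by rewrite /tens3 scale_ev_coord linearZr /= /ld_odot !mxE !eqxx /=; ring.
  by rewrite /tens3 !ev_coord [c == t]eq_sym (negbTE tc) mulr0.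
rewrite dpair_ev !ev_mulmx linear_sumlz summxE.
apply: eq_bigr => q _; rewrite linearZl linear_sumr /= mxE summxE mulr_sumr.
by apply: eq_bigr => s _; rewrite linearZr /= !mxE; ring.
Qed.

Lemma S_tensor_succ_term a b c :
  \sum_p \sum_q \sum_s \sum_t
    tens3 (succ (r p q *: ev p) (r s t *: ev s)) (ev q) (ev t) a b c
  = dpair (ev a) (succ (ev b *m r^T) (ev c *m r^T)).
Proof.
transitivity (\sum_p \sum_s r p b * r s c * succ (ev p) (ev s) 0 a).
  apply: eq_bigr => p _; rewrite (big_only1 b) // => [|q qb _]; last first.
    apply: big1 => s _; apply: big1 => t _.
    by rewrite /tens3 !ev_coord [b == q]eq_sym (negbTE qb) !(mulr0, mul0r).
  apply: eq_bigr => s _; rewrite (big_only1 c) // => [|t tc _].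
    by rewrite /tens3 linearZl linearZr /= !mxE !eqxx /=; ring.
  by rewrite /tens3 !ev_coord [c == t]eq_sym (negbTE tc) mulr0.
rewrite dpair_ev !ev_mulmx linear_sumlz summxE.
apply: eq_bigr => p _; rewrite linearZl linear_sumr /= !mxE summxE mulr_sumr.
by apply: eq_bigr => s _; rewrite linearZr /= !mxE; ring.
Qed.

Definition S_form (z e x : V) :=
  dpair x (circ (e *m r) (z *m r)) - dpair e (odot (z *m r) (x *m r^T))
  - dpair z (succ (e *m r^T) (x *m r^T)).

Lemma S_form_ev a b c : S_form (ev a) (ev b) (ev c) = S_tensor succ prec r a b c.
Proof.
rewrite /S_form -S_tensor_circ_term -S_tensor_odot_term -S_tensor_succ_term -!sumrB.
apply: eq_bigr => p _; rewrite -!sumrB; apply: eq_bigr => q _; rewrite -!sumrB.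
by apply: eq_bigr => s _; rewrite -!sumrB.
Qed.

Lemma S_form_scalar1 e x : scalar (fun z => S_form z e x).
Proof.
move=> a u v; rewrite /S_form !mulmxDl -!scalemxAl ?linearPl ?linearPr /=; ring.
Qed.

Lemma S_form_scalar2 z x : scalar (fun e => S_form z e x).
Proof.
move=> a u v; rewrite /S_form !mulmxDl -!scalemxAl ?linearPl ?linearPr /=; ring.
Qed.

Lemma S_form_scalar3 z e : scalar (S_form z e).
Proof.
move=> a u v; rewrite /S_form !mulmxDl -!scalemxAl ?linearPl ?linearPr /=; ring.
Qed.

Lemma S_form_eq0 : (forall a b c, S_tensor succ prec r a b c = 0) ->
  forall z e x, S_form z e x = 0.
Proof.
move=> S0 z e x; apply: scalar_eq0_ev (S_form_scalar1 e x) _ z => a.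
apply: scalar_eq0_ev (S_form_scalar2 _ x) _ e => b.
by apply: scalar_eq0_ev (S_form_scalar3 _ _) _ x => c; rewrite S_form_ev.
Qed.
End STensor.

Lemma tappE (f g : V -> V) (M : 'M[K]_n) a b :
  tapp f g M a b = \sum_p \sum_q M p q * (f (ev p) 0 a * g (ev q) 0 b).
Proof.
rewrite /tapp summxE; apply: eq_bigr => p _; rewrite summxE; apply: eq_bigr => q _.
by rewrite mxE /tens2 mxE big_ord1 !mxE.
Qed.

Section Invariance.
Variable s : 'M[K]_n.
Hypothesis s_sym : s^T = s.

Definition inv_form (f h : {bilinear V -> V -> V}) z e X :=
  dpair z (f X (e *m s)) - dpair e (h (z *m s) X).

Lemma inv_form_ev (f h : {bilinear V -> V -> V}) X a b :
  inv_form f h (ev a) (ev b) X = (tapp (f X) id s - tapp id (h^~ X) s) a b.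
Proof.
rewrite /inv_form !dpair_ev (linear_ev_sum (linearPr f X)) (linear_ev_sum (linearPl h X)).
rewrite !sum_scale_coord !mxE !tappE; congr (_ - _); under eq_bigr do rewrite -rowE mxE.
  apply: eq_bigr => p _; rewrite [RHS](big_only1 b) // => [|q qb _].
    by rewrite ev_coord eqxx mulr1 -{1}s_sym mxE.
  by rewrite ev_coord eq_sym (negbTE qb) !mulr0.
rewrite [RHS](big_only1 a) // => [|p pa _].
  by apply: eq_bigr => q _; rewrite ev_coord eqxx mul1r.
by apply: big1 => q _; rewrite ev_coord eq_sym (negbTE pa) mul0r mulr0.
Qed.

Lemma inv_form_eq0 (f h : {bilinear V -> V -> V}) :
  (forall X, tapp (f X) id s - tapp id (h^~ X) s = 0) ->
  forall z e X, inv_form f h z e X = 0.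
Proof.
move=> tapp0 z e X; apply: (@scalar_eq0_ev _ _ (fun z => inv_form f h z e X) _ _ z).
  by move=> a u v /=; rewrite /inv_form !(linearPl, linearPr) /=; ring.
move=> i; apply: (@scalar_eq0_ev _ _ (fun e => inv_form f h (ev i) e X) _ _ e).
  by move=> a u v /=; rewrite /inv_form !(linearPl, linearPr) /=; ring.
by move=> j; rewrite inv_form_ev tapp0 mxE.
Qed.
End Invariance.
End Operations.

Section Factorizable.
Variables (K : fieldType) (n : nat).
Local Notation V := 'rV[K]_n.
Variables (succ prec : {bilinear V -> V -> V}) (r : 'M[K]_n).
Local Notation circ := (ld_circ succ prec).
Local Notation odot := (ld_odot succ prec).
Local Notation star := (ld_star succ prec).
Local Notation s := (r + r^T).
Hypothesis S_r0 : forall a b c, S_tensor succ prec r a b c = 0.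
Hypothesis s_invariant : is_invariant succ prec s.
Variable g : V -> V.
Hypothesis Tmap_sK : cancel (Tmap s) g.
Hypothesis Tmap_sKV : cancel g (Tmap s).

Lemma g_mul_tr a : g a *m r^T = a - g a *m r.
Proof. by rewrite -{2}(Tmap_sKV a) /Tmap mulmxDr addrAC subrr add0r. Qed.

Let g_mul_s a : g a *m s = a.
Proof. exact: Tmap_sKV. Qed.

Let B a b := dpair (g a) b.
Let P a := g a *m r.

Let B_addr a b c : B a (b + c) = B a b + B a c.
Proof. exact: linearDr. Qed.
Let B_oppr a b : B a (- b) = - B a b.
Proof. exact: linearNr. Qed.

Let B_odot_circ0 X Y Z : B_odot_circ succ prec B X Y Z = 0.
Proof.
have := inv_form_eq0 (add_trmx_sym r) (f := odot) (h := circ)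
  (fun X => (s_invariant X).1) (g Y) (g Z) X.
by rewrite /inv_form /B_odot_circ !g_mul_s.
Qed.
Let B_star_prec0 X Y Z : B_star_prec succ prec B X Y Z = 0.
Proof.
have inv X' : tapp (star X') id s - tapp id (prec^~ X') s = 0.
  by have := (s_invariant X').2; rewrite (add_trmx_sym r).
have := inv_form_eq0 (add_trmx_sym r) (f := star) (h := prec) inv (g Y) (g Z) X.
by rewrite /inv_form /B_star_prec !g_mul_s.
Qed.
Let B_S0 x y z : B_S succ prec B P x y z = 0.
Proof. by have := S_form_eq0 S_r0 (g x) (g y) (g z); rewrite /S_form !g_mul_tr. Qed.

Let eq_on_g (F G : V -> V -> V) :
  (forall x y z, dpair (g z) (F (g x) (g y)) = dpair (g z) (G (g x) (g y))) ->
  forall z1 z2, F z1 z2 = G z1 z2.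
Proof.
move=> FG z1 z2; apply: dpair_ext => xi.
by rewrite -(Tmap_sK z1) -(Tmap_sK z2) -(Tmap_sK xi) FG.
Qed.

Lemma Tmap_dsucc : forall z1 z2,
  Tmap r (dsucc succ prec r z1 z2) = succ (Tmap r z1) (Tmap r z2).
Proof.
apply: eq_on_g => x y z; rewrite /Tmap dpair_mulmx g_mul_tr /dsucc linearBr /=.
rewrite /Tmap (@dpair_dualop _ _ (circ _) (linearPr _ _)).
rewrite (@dpair_dualop _ _ (odot^~ _) (linearPl _ _)) g_mul_tr opprK.
exact: B_succ_P B_addr B_oppr B_odot_circ0 B_star_prec0 B_S0 x y z.
Qed.

Lemma Tmap_tr_dsucc : forall z1 z2,
  - Tmap r^T (dsucc succ prec r z1 z2) = succ (- Tmap r^T z1) (- Tmap r^T z2).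
Proof.
apply: eq_on_g => x y z.
rewrite [in RHS]linearNl [succ _ (- _)]linearNr opprK /Tmap linearNr /= dpair_mulmx trmxK.
rewrite /dsucc linearBr /= /Tmap (@dpair_dualop _ _ (circ _) (linearPr _ _)).
rewrite (@dpair_dualop _ _ (odot^~ _) (linearPl _ _)) !g_mul_tr opprK opprD opprK.
exact: B_succ_Q B_addr B_oppr B_S0 x y z.
Qed.

Lemma Tmap_dprec : forall z1 z2,
  Tmap r (dprec succ prec r z1 z2) = prec (Tmap r z1) (Tmap r z2).
Proof.
apply: eq_on_g => x y z; rewrite /Tmap dpair_mulmx g_mul_tr /dprec linearBr /=.
rewrite /Tmap (@dpair_dualop _ _ (prec _) (linearPr _ _)).
rewrite (@dpair_dualop _ _ (star _) (linearPr _ _)) !g_mul_tr opprK.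
exact: B_prec_P B_addr B_oppr B_odot_circ0 B_star_prec0 B_S0 x y z.
Qed.

Lemma Tmap_tr_dprec : forall z1 z2,
  - Tmap r^T (dprec succ prec r z1 z2) = prec (- Tmap r^T z1) (- Tmap r^T z2).
Proof.
apply: eq_on_g => x y z.
rewrite [in RHS]linearNl [prec _ (- _)]linearNr opprK /Tmap linearNr /= dpair_mulmx trmxK.
rewrite /dprec linearBr /= /Tmap (@dpair_dualop _ _ (prec _) (linearPr _ _)).
rewrite (@dpair_dualop _ _ (star _) (linearPr _ _)) !g_mul_tr opprK opprD opprK.
exact: B_prec_Q B_addr B_oppr B_odot_circ0 B_star_prec0 B_S0 x y z.
Qed.

Lemma Phi_dsucc z1 z2 :
  Phi r (dsucc succ prec r z1 z2) = prodop succ (Phi r z1) (Phi r z2).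
Proof. by rewrite /Phi /prodop Tmap_dsucc Tmap_tr_dsucc. Qed.

Lemma Phi_dprec z1 z2 :
  Phi r (dprec succ prec r z1 z2) = prodop prec (Phi r z1) (Phi r z2).
Proof. by rewrite /Phi /prodop Tmap_dprec Tmap_tr_dprec. Qed.

Lemma Phi_inj : injective (Phi r).
Proof.
move=> z1 z2 [eq1 /oppr_inj eq2].
by rewrite -(Tmap_sK z1) -(Tmap_sK z2) /Tmap !mulmxDr -!/(Tmap _ _) eq1 eq2.
Qed.

Lemma Phi_decomposition x :
  exists! p, (exists zeta, p = Phi r zeta) /\ x = p.1 - p.2.
Proof.
have PhiE zeta : (Phi r zeta).1 - (Phi r zeta).2 = Tmap s zeta.
  by rewrite /Phi /Tmap /= opprK -mulmxDr.
exists (Phi r (g x)); split=> [|_ [[zeta ->] ->]]; first by split; [exists (g x) | rewrite PhiE].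
by rewrite PhiE Tmap_sK.
Qed.
End Factorizable.

Lemma Phi_linear (K : fieldType) (n : nat) (r : 'M[K]_n) a z1 z2 :
  Phi r (a *: z1 + z2) = (a *: (Phi r z1).1 + (Phi r z2).1, a *: (Phi r z1).2 + (Phi r z2).2).
Proof. by rewrite /Phi /Tmap /= !mulmxDl -!scalemxAl opprD scalerN. Qed.

Definition bilinear_of_op (K : fieldType) (n : nat) (op : 'rV[K]_n -> 'rV[K]_n -> 'rV[K]_n)
  (op_bil : bilinear_op op) : {bilinear 'rV[K]_n -> 'rV[K]_n -> 'rV[K]_n} :=
  HB.pack op (bilinear_isBilinear.Build _ _ _ _ _ _ op (op_bil.2, op_bil.1)).

Unset Implicit Arguments. Set Strict Implicit.

Theorem mainTheorem10 (K : fieldType) (n : nat)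
  (succ prec : 'rV[K]_n -> 'rV[K]_n -> 'rV[K]_n) (r : 'M[K]_n) :
  is_LD succ prec ->
  (forall i j k, S_tensor succ prec r i j k = 0) ->
  is_invariant succ prec (r + r^T) ->
  bijective (Tmap (r + r^T)) ->
  (* Im(Phi) is a Leibniz-dendriform subalgebra of A (+) A *)
  ((exists z, Phi r z = (0, 0)) /\
   (forall (a : K) zeta eta, exists th,
      Phi r th = (a *: (Phi r zeta).1 + (Phi r eta).1,
                  a *: (Phi r zeta).2 + (Phi r eta).2)) /\
   (forall zeta eta, exists th,
      prodop succ (Phi r zeta) (Phi r eta) = Phi r th) /\
   (forall zeta eta, exists th,
      prodop prec (Phi r zeta) (Phi r eta) = Phi r th)) /\
  (* Phi is an isomorphism (A^*, succ_r, prec_r) -> Im(Phi) *)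
  ((forall (a : K) zeta eta,
      Phi r (a *: zeta + eta) = (a *: (Phi r zeta).1 + (Phi r eta).1,
                                 a *: (Phi r zeta).2 + (Phi r eta).2)) /\
   injective (Phi r) /\
   (forall zeta eta,
      Phi r (dsucc succ prec r zeta eta) = prodop succ (Phi r zeta) (Phi r eta)) /\
   (forall zeta eta,
      Phi r (dprec succ prec r zeta eta) = prodop prec (Phi r zeta) (Phi r eta))) /\
  (* unique decomposition x = x1 - x2 with (x1, x2) in Im(Phi) *)
  (forall x : 'rV[K]_n, exists! p : 'rV[K]_n * 'rV[K]_n,
      (exists zeta, p = Phi r zeta) /\ x = p.1 - p.2).
Proof.
move=> [succ_bil [prec_bil _]] S_r0 s_inv [g Tmap_sK Tmap_sKV].
pose succB := bilinear_of_op succ_bil; pose precB := bilinear_of_op prec_bil.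
have Phi_succ := Phi_dsucc (succ := succB) (prec := precB) S_r0 s_inv Tmap_sK Tmap_sKV.
have Phi_prec := Phi_dprec (succ := succB) (prec := precB) S_r0 s_inv Tmap_sK Tmap_sKV.
split; [split; [|split; [|split]] | split; [split; [|split; [|split]] | ]].
- by exists 0; rewrite /Phi /Tmap !mul0mx oppr0.
- by move=> a z1 z2; exists (a *: z1 + z2); rewrite Phi_linear.
- by move=> z1 z2; exists (dsucc succ prec r z1 z2); rewrite Phi_succ.
- by move=> z1 z2; exists (dprec succ prec r z1 z2); rewrite Phi_prec.
- exact: Phi_linear.
- exact: Phi_inj Tmap_sK.
- exact: Phi_succ.
- exact: Phi_prec.
- exact: Phi_decomposition Tmap_sK Tmap_sKV.
Qed.
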